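(* Let $n>2$ be an integer and $g=3n+1$, and let $G=\{\ell_1<\dots<\ell_g\}$ be a pure $(2n)$-sparse gapset of genus $g$. Then there is a unique $\alpha\in[1,g-1]$ such that $\ell_{\alpha+1}-\ell_\alpha=2n$.
   Context: A gapset is a finite set $G\subset\mathbb{N}=\{1,2,\dots\}$ such that whenever $z\in G$ and $z=x+y$ with $x,y\in\mathbb{N}$, then $x\in G$ or $y\in G$; its genus is $g=\#G$. $G$ is pure $\kappa$-sparse if $\ell_{i+1}-\ell_i\le\kappa$ for all $i$ with equality for some $i$. *)

From mathcomp Require Import all_boot.
Set Implicit Arguments. Unset Strict Implicit. Unset Printing Implicit Defensive.

(* A gapset G = {l_1 < ... < l_g} is represented by the strictly increasing
   list [l_1; ...; l_g] of its elements (so the set is finite and listed in order). *)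
Definition is_gapset (s : seq nat) : Prop :=
  sorted ltn s /\ (forall z, z \in s -> 0 < z) /\
  (forall x y, 0 < x -> 0 < y -> x + y \in s -> (x \in s) \/ (y \in s)).

Definition ell (s : seq nat) (i : nat) : nat := nth 0 s i.-1.

Definition pure_sparse (kappa : nat) (s : seq nat) : Prop :=
  (forall i, 1 <= i <= (size s).-1 -> ell s i.+1 - ell s i <= kappa) /\
  (exists i, 1 <= i <= (size s).-1 /\ ell s i.+1 - ell s i = kappa).

From mathcomp Require Import all_boot.
From mathcomp Require Import zify.

(* The largest gap z of a gapset of genus g satisfies z <= 2g - 1: for each
   1 <= x < z one of x, z - x is a gap other than z, and at most g - 1 values
   of x have x (resp. z - x) in G, so z - 1 <= 2(g - 1).  Two jumps of size 2n force the
   largest gap to be at least g + 2(2n - 1), which exceeds 2g - 1 = 6n + 1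
   as soon as n > 2. *)

Lemma count_mem_le_size_rem (T : eqType) (s t : seq T) (z : T) :
  uniq t -> z \in s -> z \notin t -> count (mem s) t <= (size s).-1.
Proof.
move=> ut zs zNt; rewrite -size_filter -(size_rem zs).
apply: uniq_leq_size; first exact: filter_uniq.
move=> x; rewrite mem_filter => /andP[xs xt]; apply: rem_mem xs.
by apply: contraNneq zNt => <-.
Qed.

Lemma gapset_elem_lt (s : seq nat) (z : nat) :
  is_gapset s -> z \in s -> z < 2 * size s.
Proof.
move=> [ss [pos gap]] zs.
have us : uniq s := sorted_uniq ltn_trans ltnn ss.
have z_gt0 := pos z zs.
set t := iota 1 z.-1.
have low : count (mem s) t <= (size s).-1.
  by apply: count_mem_le_size_rem zs _; rewrite ?iota_uniq // mem_iota; lia.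
have high : count (preim (subn z) (mem s)) t <= (size s).-1.
  rewrite -count_map; apply: count_mem_le_size_rem zs _.
    by rewrite map_inj_in_uniq ?iota_uniq // => x y; rewrite !mem_iota; lia.
  by apply/mapP => -[x]; rewrite mem_iota; lia.
have covered : count (predU (mem s) (preim (subn z) (mem s))) t = z.-1.
  rewrite -(size_iota 1 z.-1); apply/eqP; rewrite -all_count.
  apply/allP => x; rewrite mem_iota => hx /=.
  have xz : x <= z by lia.
  have [|||-> //|->] := gap x (z - x); rewrite ?subnKC ?orbT //; lia.
have covered_le :
    z.-1 <= count (mem s) t + count (preim (subn z) (mem s)) t.
  by rewrite -covered -count_predUI leq_addr.
have s_gt0 : 0 < size s by case: (s) zs.
lia.
Qed.

Lemma sorted_ltn_nth_addn (s : seq nat) (i j : nat) :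
  sorted ltn s -> i <= j -> j < size s -> nth 0 s i + (j - i) <= nth 0 s j.
Proof.
move=> ss; elim: j => [|j IH] hij hj.
  by move: hij; rewrite leqn0 => /eqP ->; rewrite addn0.
have [lt_ji | le_ij] := ltnP j i.
  have -> : i = j.+1 by lia.
  by rewrite subnn addn0.
have step : nth 0 s j < nth 0 s j.+1.
  by apply: (sorted_ltn_nth ltn_trans 0 ss); rewrite ?inE // ltnW.
have := IH le_ij (ltnW hj); lia.
Qed.

Lemma last_ge_two_jumps (s : seq nat) (k a b : nat) :
  sorted ltn s -> 0 < ell s 1 -> 1 <= a < b -> b < size s ->
  ell s a + k <= ell s a.+1 -> ell s b + k <= ell s b.+1 ->
  size s + 2 * k <= ell s (size s) + 2.
Proof.
rewrite /ell /= => ss l1 hab hb ja jb.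
have up_to_a : nth 0 s 0 + (a.-1 - 0) <= nth 0 s a.-1.
  by apply: sorted_ltn_nth_addn; lia.
have a_to_b : nth 0 s a + (b.-1 - a) <= nth 0 s b.-1.
  by apply: sorted_ltn_nth_addn; lia.
have b_to_last : nth 0 s b + ((size s).-1 - b) <= nth 0 s (size s).-1.
  by apply: sorted_ltn_nth_addn; lia.
lia.
Qed.

Theorem mainTheorem18 (n : nat) (s : seq nat) :
  2 < n -> is_gapset s -> size s = 3 * n + 1 -> pure_sparse (2 * n) s ->
  exists! alpha : nat,
    1 <= alpha <= size s - 1 /\ ell s alpha.+1 - ell s alpha = 2 * n.
Proof.
move=> n_gt2 gs size_s [_ [a [ha ea]]].
exists a; split; first by split=> //; lia.
move=> b [hb eb].
have [ss [pos _]] := gs.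
have ell1_gt0 : 0 < ell s 1 by apply: pos; rewrite mem_nth // size_s addn1.
have last_lt : ell s (size s) < 2 * size s.
  by apply: gapset_elem_lt; rewrite ?mem_nth // size_s addn1.
have no_two_jumps c d : 1 <= c < d -> d < size s ->
    ell s c.+1 - ell s c = 2 * n -> ell s d.+1 - ell s d = 2 * n -> False.
  move=> hcd hd ec ed.
  have := @last_ge_two_jumps s (2 * n) c d ss ell1_gt0 hcd hd; lia.
have [lt_ab | lt_ba | //] := ltngtP a b.
- by exfalso; apply: (no_two_jumps a b); lia.
- by exfalso; apply: (no_two_jumps b a); lia.
Qed.
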